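(* Let $\mathbf{A}$ be an affine algebra such that $\mathbf{A}^2$ is finitely generated. Then $d_{\mathbf{A}}(n)\in O(n)$. If, moreover, $\mathbf{A}$ is finite and has more than one element, then $d_{\mathbf{A}}(n)\in \Theta(n)$.
   Context: An algebra is affine if it is polynomially equivalent to a module. For an algebra $\mathbf{A}$ and $n\in\omega$, $d_{\mathbf{A}}(n)$ is the least size of a generating set of the direct power $\mathbf{A}^n$. Standard Big-O and Big-Theta notation is used. *)

From HB Require Import structures.
From Stdlib Require Import List.
From mathcomp Require Import all_boot all_algebra.


Unset Printing Implicit Defensive.
Import GRing.Theory.
Local Open Scope ring_scope.

Record signature := Signature { op_sym : Type; arity : op_sym -> nat }.
Arguments arity {s} o.

Record algebra (s : signature) := Algebra {
  carrier :> Type;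
  interp : forall o : op_sym s, ('I_(arity o) -> carrier) -> carrier }.
Arguments Algebra {s} carrier interp.
Arguments carrier {s} a.
Arguments interp {s} a o.

Definition power (s : signature) (A : algebra s) (n : nat) : algebra s :=
  @Algebra s ('I_n -> carrier A)
    (fun o x => fun i => interp A o (fun j => x j i)).
Arguments power {s} A n.

Inductive generated (s : signature) (A : algebra s) (X : carrier A -> Prop)
  : carrier A -> Prop :=
| gen_base x : X x -> generated s A X x
| gen_op (o : op_sym s) (a : 'I_(arity o) -> carrier A) :
    (forall j, generated s A X (a j)) -> generated s A X (interp A o a).

Arguments generated {s} A X _.

Definition generates (s : signature) (A : algebra s) (l : seq (carrier A)) :=
  forall x, generated A (fun y => In y l) x.
Arguments generates {s} A l.

Definition fin_generated (s : signature) (A : algebra s) :=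
  exists l : seq (carrier A), generates A l.
Arguments fin_generated {s} A.

(* d_A(n) <= k : A^n has a generating set with at most k elements. *)
Definition d_le (s : signature) (A : algebra s) (n k : nat) :=
  exists l : seq (carrier (power A n)), (size l <= k)%N /\ generates (power A n) l.
Arguments d_le {s} A n k.

(* k <= d_A(n) : every generating set of A^n has at least k elements. *)
Definition d_ge (s : signature) (A : algebra s) (n k : nat) :=
  forall l : seq (carrier (power A n)), generates (power A n) l -> (k <= size l)%N.
Arguments d_ge {s} A n k.

Definition finite_algebra (s : signature) (A : algebra s) :=
  exists l : seq (carrier A), forall x, In x l.
Arguments finite_algebra {s} A.

Inductive poly_op (s : signature) (A : algebra s) (k : nat)
  : (('I_k -> carrier A) -> carrier A) -> Prop :=
| pol_proj (i : 'I_k) : poly_op s A k (fun x => x i)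
| pol_const (c : carrier A) : poly_op s A k (fun _ => c)
| pol_comp (o : op_sym s) (g : 'I_(arity o) -> ('I_k -> carrier A) -> carrier A) :
    (forall j, poly_op s A k (g j)) ->
    poly_op s A k (fun x => interp A o (fun j => g j x)).
Arguments poly_op {s} A {k} _.

Inductive mod_op (R : Type) := MAdd | MNeg | MZero | MScal of R.
Arguments MAdd {R}. Arguments MNeg {R}. Arguments MZero {R}.

Definition mod_arity (R : Type) (o : mod_op R) : nat :=
  match o with MAdd => 2 | MNeg => 1 | MZero => 0 | MScal _ => 1 end.
Arguments mod_arity {R} o.

Definition mod_sig (R : Type) : signature := @Signature (mod_op R) (@mod_arity R).

Definition mod_interp (R : pzRingType) (M : lmodType R) (o : mod_op R)
  : ('I_(mod_arity o) -> M) -> M :=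
  match o as o0 return ('I_(mod_arity o0) -> M) -> M with
  | MAdd => fun x => x ord0 + x ord_max
  | MNeg => fun x => - x ord0
  | MZero => fun _ => 0
  | MScal r => fun x => r *: x ord0
  end.
Arguments mod_interp {R} M o.

Definition mod_alg (R : pzRingType) (M : lmodType R) : algebra (mod_sig R) :=
  @Algebra (mod_sig R) M (@mod_interp R M).
Arguments mod_alg {R} M.

Definition poly_equiv_via (s t : signature) (A : algebra s) (B : algebra t)
  (h : carrier A -> carrier B) :=
  bijective h /\
  forall k : nat,
    (forall f, poly_op A f -> exists g, @poly_op t B k g /\
        forall x, h (f x) = g (fun i => h (x i))) /\
    (forall g, poly_op B g -> exists f, @poly_op s A k f /\
        forall x, h (f x) = g (fun i => h (x i))).
Arguments poly_equiv_via {s t} A B h.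

Definition affine (s : signature) (A : algebra s) :=
  exists (R : pzRingType) (M : lmodType R) (h : carrier A -> M),
    poly_equiv_via A (mod_alg M) h.

Arguments affine {s} A.

From Stdlib Require Import List FunctionalExtensionality.
From mathcomp Require Import all_boot all_algebra zify.
Import GRing.Theory.

(* Upper bound: an affine algebra has the Maltsev polynomial x - y + z.
   Spreading each generator (a, b) of A^2 into the n + 1 "step vectors"
   (a,...,a,b,...,b) of A^n gives a generating set of A^n: a vector is built
   coordinate by coordinate, since the Maltsev polynomial applied to it (with
   its k-th coordinate reset) and to two consecutive step vectors corrects
   exactly the k-th coordinate.

   Lower bound: a polynomial operation of a module is a sum of unary maps plus
   a constant.  Hence every element of A^n is determined by k |A| + 1 elements
   of A when A^n is k-generated, so 2^n <= |A^n| <= |A|^(k |A| + 1). *)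

Lemma In_allpairs (S T R : Type) (f : S -> T -> R) (s : seq S) (t : seq T) x y :
  In x s -> In y t -> In (f x y) [seq f x y | x <- s, y <- t].
Proof.
elim: s => // x' s IHs [<- | xs] yt; rewrite allpairs_cons; apply: in_or_app.
  by left; apply: in_map.
by right; apply: IHs.
Qed.

Lemma In_iota m n i : (m <= i < m + n)%N -> In i (iota m n).
Proof. by move=> /andP[/leP ? /ltP ?]; apply/in_seq. Qed.

Lemma In_tnth {T : Type} {s : seq T} {x : T} :
  In x s -> exists i : 'I_(size s), tnth (in_tuple s) i = x.
Proof.
move=> sx; suff [i lt_i <-] : exists2 i, (i < size s)%N & nth x s i = x.
  by exists (Ordinal lt_i); rewrite (tnth_nth x).
elim: s sx => //= y s IHs [<- | sx]; first by exists 0%N.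
by have [i lt_i si] := IHs sx; exists i.+1.
Qed.

Section PowerGeneration.

Context {s : signature} {A : algebra s}.

Lemma generated_power_comp {m n} {sigma : 'I_n -> 'I_m}
    {X : power A m -> Prop} {Y : power A n -> Prop} {p} :
  generated (power A m) X p -> (forall q, X q -> Y (fun j => q (sigma j))) ->
  generated (power A n) Y (fun j => p (sigma j)).
Proof.
move=> gen_p XY; elim: gen_p => [q Xq | o a _ IH]; first by apply: gen_base; apply: XY.
exact: (@gen_op s (power A n) Y o (fun i j => a i (sigma j)) IH).
Qed.

Lemma generated_power_poly_op n (Y : power A n -> Prop) k
    (F : ('I_k -> A) -> A) (u : 'I_k -> power A n) :
  poly_op A F -> (forall c, generated (power A n) Y (fun _ => c)) ->
  (forall i, generated (power A n) Y (u i)) ->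
  generated (power A n) Y (fun j => F (fun i => u i j)).
Proof.
move=> PF gen_const gen_u; elim: PF => [i | c | o g _ IH] //.
exact: (@gen_op s (power A n) Y o (fun i j => g i (fun i' => u i' j)) IH).
Qed.

Lemma generated_power_poly_repr {n} {l : seq (power A n)} {x} :
  generated (power A n) (fun y => In y l) x ->
  exists2 F, poly_op A F & forall j, x j = F (fun i => tnth (in_tuple l) i j).
Proof.
elim=> [y ly | o a _ IH].
  have [i <-] := In_tnth ly.
  by exists (fun z => z i) => //; apply: pol_proj.
have [Fs PFs FsE] := fin_all_exists2 IH.
exists (fun z => interp A o (fun i => Fs i z)); first exact: pol_comp.
move=> j /=; congr (interp A o); apply: functional_extensionality => i.
exact: FsE.
Qed.

End PowerGeneration.

Definition maltsev_op {T : Type} (f : ('I_3 -> T) -> T) :=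
  forall a b, f (tnth [tuple a; b; b]) = a /\ f (tnth [tuple b; b; a]) = a.

Section ModulePolynomials.

Context {R : pzRingType} {M : lmodType R}.
Local Open Scope ring_scope.

Lemma mod_poly_op_add k (f g : ('I_k -> M) -> M) :
  poly_op (mod_alg M) f -> poly_op (mod_alg M) g ->
  poly_op (mod_alg M) (fun x => f x + g x).
Proof.
move=> Pf Pg.
apply: (@pol_comp _ (mod_alg M) k MAdd (fun j => if j == ord0 then f else g)).
by move=> j; case: ifP.
Qed.

Lemma mod_poly_op_opp k (f : ('I_k -> M) -> M) :
  poly_op (mod_alg M) f -> poly_op (mod_alg M) (fun x => - f x).
Proof. by move=> Pf; apply: (@pol_comp _ (mod_alg M) k MNeg (fun _ => f)). Qed.

Lemma mod_poly_op_sum_unary {k} {G : ('I_k -> M) -> M} :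
  poly_op (mod_alg M) G ->
  exists (phi : 'I_k -> M -> M) (c : M), forall x, G x = \sum_(i < k) phi i (x i) + c.
Proof.
elim=> [i | c | o g _ IH].
- exists (fun i' a => if i' == i then a else 0), 0 => x.
  by rewrite addr0 (bigD1 i) //= eqxx big1 ?addr0 // => i' /negbTE ->.
- by exists (fun _ _ => 0), c => x; rewrite big1 ?add0r.
- case: o g IH => [| | | r] g IH /=.
  + have [phi0 [c0 E0]] := IH ord0; have [phi1 [c1 E1]] := IH ord_max.
    exists (fun i a => phi0 i a + phi1 i a), (c0 + c1) => x.
    by rewrite E0 E1 big_split /= addrACA.
  + have [phi0 [c0 E0]] := IH ord0.
    by exists (fun i a => - phi0 i a), (- c0) => x; rewrite E0 opprD sumrN.
  + by exists (fun _ _ => 0), 0 => x; rewrite big1 ?add0r.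
  + have [phi0 [c0 E0]] := IH ord0.
    exists (fun i a => r *: phi0 i a), (r *: c0) => x.
    by rewrite E0 scalerDr scaler_sumr.
Qed.

Lemma mod_maltsev_poly_op :
  poly_op (mod_alg M) (fun x : 'I_3 -> M => x ord0 - x (inord 1) + x ord_max).
Proof.
by apply: mod_poly_op_add; [apply: mod_poly_op_add; [|apply: mod_poly_op_opp] |];
  apply: pol_proj.
Qed.

End ModulePolynomials.

Lemma affine_maltsev {s : signature} {A : algebra s} {R : pzRingType}
    {M : lmodType R} {h : A -> M} :
  poly_equiv_via A (mod_alg M) h ->
  exists2 f : ('I_3 -> A) -> A, poly_op A f & maltsev_op f.
Proof.
case=> [[g hK _] equiv_h].
have [f [Pf hf]] := (equiv_h 3%N).2 _ mod_maltsev_poly_op.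
exists f => // a b; split; apply: (can_inj hK);
  by rewrite hf !(tnth_nth a) /= inordK // ?subrK // subrr add0r.
Qed.

Definition step_vec {s : signature} {A : algebra s} n i (p : 'I_2 -> A) : power A n :=
  fun j => p (if (j < i)%N then ord0 else ord_max).

Section MaltsevPowers.

Context {s : signature} {A : algebra s} {f : ('I_3 -> A) -> A}.
Hypotheses (poly_f : poly_op A f) (maltsev_f : maltsev_op f).

Lemma maltsev_fix_coordinate {n k : nat} (lt_kn : (k < n)%N) {z : A} {x : power A n} :
  (forall j : 'I_n, (k < j)%N -> x j = z) ->
  let p := tnth [tuple x (Ordinal lt_kn); z] in
  let x' := fun j : 'I_n => if (j == k :> nat) then z else x j in
  x = fun j => f (fun i => tnth [tuple x'; step_vec n k p; step_vec n k.+1 p] i j).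
Proof.
move=> x_z p x'; apply: functional_extensionality => j.
have -> : (fun i => tnth [tuple x'; step_vec n k p; step_vec n k.+1 p] i j)
    = tnth [tuple x' j; step_vec n k p j; step_vec n k.+1 p j].
  by apply: functional_extensionality => -[[|[|[|]]] ?].
rewrite /x' /step_vec /p; case: (ltngtP j k) => [lt_jk | lt_kj | eq_jk].
- by rewrite ltnS ltnW // (maltsev_f _ _).1.
- by rewrite ltnS leqNgt lt_kj x_z // (maltsev_f _ _).1.
- have -> : Ordinal lt_kn = j by apply: val_inj.
  have -> : tnth [tuple x j; z] ord_max = z by [].
  by rewrite eq_jk ltnSn (maltsev_f _ _).2.
Qed.

Lemma generates_power_step_vecs {l : seq (power A 2)} {n} :
  (0 < n)%N -> generates (power A 2) l ->
  generates (power A n) [seq step_vec n i q | i <- iota 0 n.+1, q <- l].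
Proof.
move=> n_gt0 gen_l; set L := [seq _ | i <- _, q <- _]; pose Y y := In y L.
have gen_step i p : (i <= n)%N -> generated (power A n) Y (step_vec n i p).
  move=> le_in; apply: generated_power_comp (gen_l p) _ => q lq.
  by apply: In_allpairs lq; apply: In_iota.
have gen_const c : generated (power A n) Y (fun _ => c).
  exact: (gen_step 0%N (fun _ => c)).
move=> x; pose z := x (Ordinal n_gt0).
suff gen_tail k : forall y : power A n,
    (forall j : 'I_n, (k <= j)%N -> y j = z) -> generated (power A n) Y y.
  by apply: (gen_tail n) => j; rewrite leqNgt ltn_ord.
elim: k => [|k IHk] y y_z.
  have -> : y = fun _ => z by apply: functional_extensionality => j; apply: y_z.
  exact: gen_const.
have [lt_kn | le_nk] := ltnP k n; last first.
  by apply: IHk => j le_kj; have := ltn_ord j; lia.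
have gen_y' : generated (power A n) Y (fun j => if j == k :> nat then z else y j).
  by apply: IHk => j le_kj; case: eqP => // ne_jk; apply: y_z; lia.
rewrite (maltsev_fix_coordinate lt_kn y_z).
apply: generated_power_poly_op => // -[[|[|[|//]]] lt_i3];
  [exact: gen_y' | exact/gen_step/ltnW | exact: gen_step].
Qed.

End MaltsevPowers.

Section AffineCounting.

Context {s : signature} {A : algebra s} {R : pzRingType} {M : lmodType R}.
Context {h : A -> M} {la : seq A}.
Hypotheses (equiv_h : poly_equiv_via A (mod_alg M) h) (enum_A : forall a, In a la).

Local Notation m := (size la).
Local Notation elt := (tnth (in_tuple la)).

Lemma elt_onto a : exists i, elt i = a.
Proof. exact: In_tnth (enum_A a). Qed.

Lemma affine_power_card_le {n} {l : seq (power A n)} {T : finType} {t : T -> power A n} :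
  generates (power A n) l -> injective t -> (#|T| <= m ^ (size l * m).+1)%N.
Proof.
case: equiv_h => -[g hK gK] equiv gen_l inj_t; set k := size l.
have [r rE] : exists r : 'I_k -> 'I_n -> 'I_m,
    forall i j, elt (r i j) = tnth (in_tuple l) i j.
  exact: fin_all_exists (fun i => fin_all_exists (fun j => elt_onto _)).
(* A code lists, as indices into [la], the unary maps (restricted to A) and the
   constant of the affine normal form of a polynomial. *)
pose decode (c : {ffun 'I_k * 'I_m -> 'I_m} * 'I_m) : power A n :=
  fun j => g (\sum_(i < k) h (elt (c.1 (i, r i j))) + h (elt c.2))%R.
have decode_onto x : exists c, decode c = x.
  have [F PF xF] := generated_power_poly_repr (gen_l x).
  have [G [PG hFG]] := (equiv k).1 F PF.
  have [phi [c Gc]] := mod_poly_op_sum_unary PG.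
  have [v vE] := fin_all_exists (fun iu => elt_onto (g (phi iu.1 (h (elt iu.2))))).
  have [w wE] := elt_onto (g c).
  exists (finfun v, w); apply: functional_extensionality => j.
  rewrite /decode xF -[F _]hK hFG Gc /= wE gK; congr (g (_ + _))%R.
  by apply: eq_bigr => i _; rewrite ffunE vE gK rE.
have [code codeE] := fin_all_exists (fun x => decode_onto (t x)).
apply: leq_trans (leq_card code _) _.
  by move=> x y eq_xy; apply: inj_t; rewrite -codeE eq_xy codeE.
by rewrite card_prod card_ffun card_prod !card_ord expnSr.
Qed.

Lemma size_enum_gt0 (a : A) : (0 < m)%N.
Proof. by have [i _] := elt_onto a; have := ltn_ord i; lia. Qed.

Lemma affine_d_ge {x0 y0 : A} : x0 <> y0 -> forall n, d_ge A n (n %/ (2 * m * m)).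
Proof.
move=> neq_xy n l gen_l.
pose t (b : {ffun 'I_n -> bool}) : power A n := fun j => if b j then y0 else x0.
have inj_t : injective t.
  move=> b b' eq_bb'; apply/ffunP => j; have := congr1 (@^~ j) eq_bb'.
  by rewrite /t; case: (b j); case: (b' j) => // E; case: neq_xy; rewrite E.
have := affine_power_card_le gen_l inj_t.
rewrite card_ffun card_bool card_ord => le_2n.
have : (2 ^ n <= 2 ^ (m * (size l * m).+1))%N.
  by apply: leq_trans le_2n _; rewrite expnM leq_exp2r // ltnW // ltn_expl.
rewrite leq_exp2l // => le_n.
have m_gt0 := size_enum_gt0 x0.
by rewrite -ltnS ltn_divLR ?muln_gt0 ?m_gt0 //; nia.
Qed.

End AffineCounting.

Theorem theorem2p5 (s : signature) (A : algebra s) :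
  affine A -> fin_generated (power A 2) ->
  (exists (C N : nat), forall n : nat, (N <= n)%N -> d_le A n (C * n)) /\
  (finite_algebra A -> (exists x y : carrier A, x <> y) ->
   exists (K N : nat), (0 < K)%N /\
     forall n : nat, (N <= n)%N -> d_ge A n (divn n K)).
Proof.
move=> [R [M [h equiv_h]]] [l gen_l]; split.
  have [f poly_f maltsev_f] := affine_maltsev equiv_h.
  exists (2 * size l)%N, 1%N => n n_gt0.
  exists [seq step_vec n i q | i <- iota 0 n.+1, q <- l]; split.
    by rewrite size_allpairs size_iota mulnAC leq_mul2r; apply/orP; right; lia.
  exact (generates_power_step_vecs poly_f maltsev_f n_gt0 gen_l).
move=> [la enum_A] [x0 [y0 neq_xy]].
exists (2 * size la * size la)%N, 0%N; split.
  by rewrite !muln_gt0 (size_enum_gt0 enum_A x0).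
move=> n _; exact (affine_d_ge equiv_h enum_A neq_xy n).
Qed.
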